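(* If $h\in I$ satisfies $\beta(h)=b$ (i.e. $h$ solves WFP), then $(\theta_1,\dots,\theta_k)=(\theta_1(h),\dots,\theta_k(h))$ is a solution of CAP.
   Context: Let $s:[0,B]\to[0,\infty)$ satisfy $s(0)=0$, be strictly increasing, strictly concave, differentiable, with $s'$ continuous on $[0,B]$ (so $s'>0$ is strictly decreasing). Fix $b\in(0,B]$, an integer $k\ge2$, and constants $c_1\ge c_2\ge\cdots\ge c_k>0$. The Constrained Allocation Problem (CAP) is: find $\theta_1,\dots,\theta_k\ge0$ such that (i) $\theta_1+\cdots+\theta_k=b$; (ii) $\theta_1\le\theta_2\le\cdots\le\theta_k$; (iii) $s'(\theta_j)/s'(\theta_i)=c_j/c_i$ whenever $i<j$ and $\theta_j\ge\theta_i>0$; (iv) $s'(\theta_j)/s'(0)\ge c_j/c_i$ whenever $i<j$ and $\theta_j>\theta_i=0$. Let $s'^{(-1)}:[s'(b),s'(0)]\to[0,b]$ denote the inverse of $s'$ restricted to $[0,b]$. An auxiliary function is a continuous, strictly decreasing function $g:I\to\mathbb{R}$ on an interval $I\subseteq\mathbb{R}$ for which there exist $h_{lo}<h_{hi}$ in $I$ with $g(h_{hi})\le s'(b)/c_1$ and $g(h_{lo})\ge s'(0)/c_k$. For $i=1,\dots,k$ and $h\in I$ define $\theta_i(h)=0$ if $c_ig(h)\ge s'(0)$; $\theta_i(h)=s'^{(-1)}(c_ig(h))$ if $s'(b)<c_ig(h)<s'(0)$; and $\theta_i(h)=b$ if $c_ig(h)\le s'(b)$. Let $\beta(h)=\sum_{i=1}^k\theta_i(h)$.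 The Water-Filling Problem (WFP) is: find $h\in I$ with $\beta(h)=b$. *)

From Stdlib Require Import Reals Lra ClassicalEpsilon.
Open Scope R_scope.

Definition has_deriv_within (f : R -> R) (D : R -> Prop) (x l : R) : Prop :=
  limit1_in (fun y => (f y - f x) / (y - x)) (fun y => D y /\ y <> x) l x.

Definition cont_within (f : R -> R) (D : R -> Prop) (x : R) : Prop :=
  limit1_in f D (f x) x.

Definition closed_itv (a c : R) : R -> Prop := fun x => a <= x <= c.

Definition is_interval (I : R -> Prop) : Prop :=
  forall x y z, I x -> I z -> x <= y <= z -> I y.

Definition strictly_concave_on (s : R -> R) (D : R -> Prop) : Prop :=
  forall x y t, D x -> D y -> x <> y -> 0 < t < 1 ->
    t * s x + (1 - t) * s y < s (t * x + (1 - t) * y).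

Definition utility_hyp (s ds : R -> R) (B : R) : Prop :=
  s 0 = 0 /\
  (forall x, 0 <= x <= B -> 0 <= s x) /\
  (forall x y, 0 <= x -> x < y -> y <= B -> s x < s y) /\
  strictly_concave_on s (closed_itv 0 B) /\
  (forall x, 0 <= x <= B -> has_deriv_within s (closed_itv 0 B) x (ds x)) /\
  (forall x, 0 <= x <= B -> cont_within ds (closed_itv 0 B) x).

(* s'^(-1): inverse of s' restricted to [0,b]; for y in [s'(b), s'(0)] this is
   the (unique) x in [0,b] with s'(x) = y.  Outside that range the value is
   irrelevant (it is never used there). *)
Definition sinv (ds : R -> R) (b y : R) : R :=
  epsilon (inhabits 0) (fun x => 0 <= x <= b /\ ds x = y).

Definition auxiliary (ds : R -> R) (b : R) (k : nat) (c : nat -> R)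
    (I : R -> Prop) (g : R -> R) : Prop :=
  is_interval I /\
  (forall x, I x -> cont_within g I x) /\
  (forall x y, I x -> I y -> x < y -> g y < g x) /\
  exists hlo hhi, I hlo /\ I hhi /\ hlo < hhi /\
    g hhi <= ds b / c 1%nat /\ g hlo >= ds 0 / c k.

Definition theta (ds : R -> R) (b : R) (c : nat -> R) (g : R -> R)
    (i : nat) (h : R) : R :=
  let y := c i * g h in
  if Rle_dec (ds 0) y then 0
  else if Rle_dec y (ds b) then b
  else sinv ds b y.

Fixpoint sum1 (n : nat) (f : nat -> R) : R :=
  match n with
  | O => 0
  | S m => sum1 m f + f (S m)
  end.

Definition beta (ds : R -> R) (b : R) (k : nat) (c : nat -> R) (g : R -> R)
    (h : R) : R :=
  sum1 k (fun i => theta ds b c g i h).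

Definition CAP_solution (ds : R -> R) (b : R) (k : nat) (c : nat -> R)
    (th : nat -> R) : Prop :=
  (forall i, (1 <= i <= k)%nat -> 0 <= th i) /\
  sum1 k th = b /\
  (forall i, (1 <= i < k)%nat -> th i <= th (S i)) /\
  (forall i j, (1 <= i)%nat -> (i < j)%nat -> (j <= k)%nat ->
     th j >= th i -> th i > 0 -> ds (th j) / ds (th i) = c j / c i) /\
  (forall i j, (1 <= i)%nat -> (i < j)%nat -> (j <= k)%nat ->
     th j > th i -> th i = 0 -> ds (th j) / ds 0 >= c j / c i).

(* Since s is strictly concave, s' is strictly decreasing, so s'^(-1) is
   well defined and theta_i(h) is the point where s' meets c_i g(h) (clipped
   to [0, b]).  Because beta(h) = b > 0 and k >= 2, g(h) must be positive, so
   the levels c_i g(h) decrease with i and the theta_i(h) increase.  Two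
   interior allocations satisfy s'(theta_i) = c_i g(h), which gives the ratio
   conditions, and no allocation can equal b as soon as a second one is
   positive, since the allocations are nonnegative and sum to b. *)

From Stdlib Require Import Reals Lra Lia Ranalysis5 ClassicalEpsilon.
Open Scope R_scope.

Lemma Rdiv_lt_cross a b c d : 0 < b -> 0 < d -> a * d < c * b -> a / b < c / d.
Proof.
  intros Hb Hd H.
  replace (a / b) with (a * d * / (b * d)) by (field; lra).
  replace (c / d) with (c * b * / (b * d)) by (field; lra).
  apply Rmult_lt_compat_r; [apply Rinv_0_lt_compat; nra | exact H].
Qed.

Lemma Rdiv_le_cross a b c d : 0 < b -> 0 < d -> a * d <= c * b -> a / b <= c / d.
Proof.
  intros Hb Hd H.
  replace (a / b) with (a * d * / (b * d)) by (field; lra).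
  replace (c / d) with (c * b * / (b * d)) by (field; lra).
  apply Rmult_le_compat_r; [left; apply Rinv_0_lt_compat; nra | exact H].
Qed.

Lemma limit1_in_ge f D l x0 a : limit1_in f D l x0 ->
  (forall alp, alp > 0 -> exists z, D z /\ Rabs (z - x0) < alp /\ a < f z) ->
  a <= l.
Proof.
  intros Hl Hnear.
  destruct (Rle_lt_dec a l) as [|Hlt]; [assumption|].
  destruct (Hl (a - l)) as [alp [Halp Hclose]]; [lra|].
  destruct (Hnear alp Halp) as [z [Dz [Hz Hfz]]].
  specialize (Hclose z (conj Dz Hz)); simpl in Hclose; unfold R_dist in Hclose.
  apply Rabs_def2 in Hclose; lra.
Qed.

Lemma limit1_in_le f D l x0 a : limit1_in f D l x0 ->
  (forall alp, alp > 0 -> exists z, D z /\ Rabs (z - x0) < alp /\ f z < a) ->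
  l <= a.
Proof.
  intros Hl Hnear.
  destruct (Rle_lt_dec l a) as [|Hlt]; [assumption|].
  destruct (Hl (l - a)) as [alp [Halp Hclose]]; [lra|].
  destruct (Hnear alp Halp) as [z [Dz [Hz Hfz]]].
  specialize (Hclose z (conj Dz Hz)); simpl in Hclose; unfold R_dist in Hclose.
  apply Rabs_def2 in Hclose; lra.
Qed.

Lemma exists_between_near_left u v alp : u < v -> alp > 0 ->
  exists z, u < z < v /\ Rabs (z - u) < alp.
Proof.
  intros Huv Halp; exists (u + Rmin alp (v - u) / 2).
  pose proof (Rmin_l alp (v - u)); pose proof (Rmin_r alp (v - u)).
  assert (0 < Rmin alp (v - u)) by (apply Rmin_glb_lt; lra).
  split; [lra | apply Rabs_def1; lra].
Qed.

Lemma exists_between_near_right u v alp : u < v -> alp > 0 ->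
  exists z, u < z < v /\ Rabs (z - v) < alp.
Proof.
  intros Huv Halp; exists (v - Rmin alp (v - u) / 2).
  pose proof (Rmin_l alp (v - u)); pose proof (Rmin_r alp (v - u)).
  assert (0 < Rmin alp (v - u)) by (apply Rmin_glb_lt; lra).
  split; [lra | apply Rabs_def1; lra].
Qed.

Lemma slope_sym (s : R -> R) x y : x <> y -> (s x - s y) / (x - y) = (s y - s x) / (y - x).
Proof. intros; field; lra. Qed.

Section StrictlyConcave.

Variables (s ds : R -> R) (lo hi : R).
Hypothesis concave_s : strictly_concave_on s (closed_itv lo hi).

Lemma concave_chord_slopes a m z : lo <= a -> a < m -> m < z -> z <= hi ->
  (s z - s a) / (z - a) < (s m - s a) / (m - a) /\
  (s z - s m) / (z - m) < (s z - s a) / (z - a).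
Proof.
  intros Ha Ham Hmz Hz.
  set (t := (z - m) / (z - a)).
  assert (Ht : 0 < t < 1).
  { unfold t; split; [apply Rdiv_lt_0_compat; lra|].
    apply Rmult_lt_reg_r with (z - a); [lra|].
    unfold Rdiv; rewrite Rmult_assoc, Rinv_l by lra; lra. }
  assert (Hm : t * a + (1 - t) * z = m) by (unfold t; field; lra).
  assert (Hchord : t * s a + (1 - t) * s z < s m).
  { rewrite <- Hm; apply concave_s; unfold closed_itv; lra. }
  assert (Hcross : (z - m) * s a + (m - a) * s z < (z - a) * s m).
  { replace ((z - m) * s a + (m - a) * s z)
      with ((t * s a + (1 - t) * s z) * (z - a)) by (unfold t; field; lra).
    rewrite (Rmult_comm (z - a)); apply Rmult_lt_compat_r; lra. }
  split; apply Rdiv_lt_cross; nra.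
Qed.

Hypothesis deriv_s : forall x, lo <= x <= hi -> has_deriv_within s (closed_itv lo hi) x (ds x).

(* Left and right difference quotients converge to ds, and concavity makes
   them monotone, so ds is squeezed between chord slopes. *)
Lemma slope_le_deriv x m : lo <= x -> x < m -> m <= hi -> (s m - s x) / (m - x) <= ds x.
Proof.
  intros Hx Hxm Hm.
  apply (limit1_in_ge _ _ _ x _ (deriv_s x ltac:(lra))).
  intros alp Halp.
  destruct (exists_between_near_left x m alp Hxm Halp) as [z [Hz Hnear]].
  exists z; split; [split; [unfold closed_itv; lra | lra]|]; split; [exact Hnear|].
  apply (concave_chord_slopes x z m); lra.
Qed.

Lemma deriv_le_slope m y : lo <= m -> m < y -> y <= hi -> ds y <= (s y - s m) / (y - m).
Proof.
  intros Hm Hmy Hy.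
  apply (limit1_in_le _ _ _ y _ (deriv_s y ltac:(lra))).
  intros alp Halp.
  destruct (exists_between_near_right m y alp Hmy Halp) as [z [Hz Hnear]].
  exists z; split; [split; [unfold closed_itv; lra | lra]|]; split; [exact Hnear|].
  rewrite slope_sym by lra.
  apply (concave_chord_slopes m z y); lra.
Qed.

Lemma deriv_strictly_decreasing x y : lo <= x -> x < y -> y <= hi -> ds y < ds x.
Proof.
  intros Hx Hxy Hy.
  set (m := (x + y) / 2).
  pose proof (slope_le_deriv x m Hx ltac:(unfold m; lra) ltac:(unfold m; lra)).
  pose proof (deriv_le_slope m y ltac:(unfold m; lra) ltac:(unfold m; lra) Hy).
  pose proof (concave_chord_slopes x m y Hx ltac:(unfold m; lra) ltac:(unfold m; lra) Hy).
  lra.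
Qed.

End StrictlyConcave.

Lemma deriv_nonneg_of_increasing (s : R -> R) lo hi l y :
  (forall x z, lo <= x -> x < z -> z <= hi -> s x < s z) ->
  has_deriv_within s (closed_itv lo hi) y l -> lo < y <= hi -> 0 <= l.
Proof.
  intros Hincr Hd Hy.
  apply (limit1_in_ge _ _ _ y _ Hd).
  intros alp Halp.
  destruct (exists_between_near_right lo y alp ltac:(lra) Halp) as [z [Hz Hnear]].
  exists z; split; [split; [unfold closed_itv; lra | lra]|]; split; [exact Hnear|].
  rewrite slope_sym by lra.
  apply Rdiv_lt_0_compat; [pose proof (Hincr z y ltac:(lra) ltac:(lra) ltac:(lra)) |]; lra.
Qed.

Definition clamp (a c x : R) : R := Rmax a (Rmin x c).

Lemma clamp_in a c x : a <= c -> a <= clamp a c x <= c.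
Proof. unfold clamp, Rmax, Rmin; intros; repeat destruct Rle_dec; lra. Qed.

Lemma clamp_id a c x : a <= x <= c -> clamp a c x = x.
Proof. unfold clamp, Rmax, Rmin; intros; repeat destruct Rle_dec; lra. Qed.

Lemma clamp_dist a c x y : Rabs (clamp a c x - clamp a c y) <= Rabs (x - y).
Proof.
  unfold clamp, Rmax, Rmin, Rabs; repeat destruct Rle_dec; repeat destruct Rcase_abs; lra.
Qed.

(* Clamping turns continuity relative to [a, c] into the global continuity
   that [IVT_interv] requires. *)
Lemma IVT_within_decreasing f D a c y : a < c ->
  (forall x, a <= x <= c -> D x) ->
  (forall x, a <= x <= c -> cont_within f D x) ->
  f c < y < f a -> exists z, a <= z <= c /\ f z = y.
Proof.
  intros Hac HD Hcont Hy.
  set (F := fun x => y - f (clamp a c x)).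
  assert (HF : forall x, a <= x <= c -> continuity_pt F x).
  { intros x Hx eps Heps.
    destruct (Hcont x Hx eps Heps) as [alp [Halp Hclose]].
    exists alp; split; [exact Halp|]; intros x' [_ Hx']; simpl in *; unfold R_dist in *.
    unfold F; rewrite (clamp_id a c x Hx).
    replace (y - f (clamp a c x') - (y - f x)) with (- (f (clamp a c x') - f x)) by ring.
    rewrite Rabs_Ropp; apply Hclose; split.
    - apply HD, clamp_in; lra.
    - rewrite <- (clamp_id a c x Hx).
      pose proof (clamp_dist a c x' x); lra. }
  destruct (IVT_interv F a c HF Hac) as [z [Hz Fz]]; unfold F in *.
  - rewrite clamp_id; lra.
  - rewrite clamp_id; lra.
  - exists z; split; [exact Hz|]; rewrite clamp_id in Fz; lra.
Qed.

Lemma sinv_spec s ds B b : utility_hyp s ds B -> 0 < b -> b <= B ->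
  forall y, ds b < y < ds 0 -> 0 <= sinv ds b y <= b /\ ds (sinv ds b y) = y.
Proof.
  intros [_ [_ [_ [_ [_ Hcont]]]]] Hb HbB y Hy.
  unfold sinv; apply epsilon_spec.
  apply (IVT_within_decreasing ds (closed_itv 0 B)); try assumption.
  - intros x Hx; unfold closed_itv; lra.
  - intros x Hx; apply Hcont; lra.
Qed.

Lemma sum1_nonneg n f : (forall i, (1 <= i <= n)%nat -> 0 <= f i) -> 0 <= sum1 n f.
Proof.
  induction n as [|n IH]; simpl; intros Hf; [lra|].
  pose proof (Hf (S n) ltac:(lia)).
  assert (0 <= sum1 n f) by (apply IH; intros; apply Hf; lia); lra.
Qed.

Lemma sum1_ge_term n f : (forall i, (1 <= i <= n)%nat -> 0 <= f i) ->
  forall i, (1 <= i <= n)%nat -> f i <= sum1 n f.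
Proof.
  induction n as [|n IH]; simpl; intros Hf i Hi; [lia|].
  destruct (Nat.eq_dec i (S n)) as [->|Hne].
  - assert (0 <= sum1 n f) by (apply sum1_nonneg; intros; apply Hf; lia); lra.
  - pose proof (Hf (S n) ltac:(lia)).
    assert (f i <= sum1 n f) by (apply IH; [intros; apply Hf; lia | lia]); lra.
Qed.

Lemma sum1_ge_pair n f : (forall i, (1 <= i <= n)%nat -> 0 <= f i) ->
  forall i j, (1 <= i)%nat -> (i < j)%nat -> (j <= n)%nat -> f i + f j <= sum1 n f.
Proof.
  induction n as [|n IH]; simpl; intros Hf i j Hi Hij Hj; [lia|].
  destruct (Nat.eq_dec j (S n)) as [->|Hne].
  - assert (f i <= sum1 n f) by (apply sum1_ge_term; [intros; apply Hf; lia | lia]); lra.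
  - pose proof (Hf (S n) ltac:(lia)).
    assert (f i + f j <= sum1 n f) by (apply IH; [intros; apply Hf; lia | lia..]); lra.
Qed.

Lemma antitone_step_le k (c : nat -> R) : (forall i, (1 <= i < k)%nat -> c i >= c (S i)) ->
  forall i j, (1 <= i)%nat -> (i <= j)%nat -> (j <= k)%nat -> c j <= c i.
Proof.
  intros Hc i j Hi Hij Hj; induction j as [|j IH]; [lia|].
  destruct (Nat.eq_dec i (S j)) as [->|Hne]; [lra|].
  pose proof (Hc j ltac:(lia)); pose proof (IH ltac:(lia) ltac:(lia)); lra.
Qed.

Section CAP.

Variables (ds : R -> R) (b : R) (k : nat) (c : nat -> R) (g : R -> R) (h : R).

Hypothesis b_pos : 0 < b.
Hypothesis ds_decreasing : forall x y, 0 <= x -> x < y -> y <= b -> ds y < ds x.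
Hypothesis ds_b_nonneg : 0 <= ds b.
Hypothesis sinv_ds : forall y, ds b < y < ds 0 -> 0 <= sinv ds b y <= b /\ ds (sinv ds b y) = y.
Hypothesis two_le_k : (2 <= k)%nat.
Hypothesis c_antitone : forall i, (1 <= i < k)%nat -> c i >= c (S i).
Hypothesis c_k_pos : c k > 0.
Hypothesis beta_eq_b : beta ds b k c g h = b.

Local Notation T i := (theta ds b c g i h).

Variant theta_spec (y t : R) : Prop :=
  | theta_zero : ds 0 <= y -> t = 0 -> theta_spec y t
  | theta_full : y <= ds b -> y < ds 0 -> t = b -> theta_spec y t
  | theta_inner : ds b < y < ds 0 -> 0 <= t <= b -> ds t = y -> theta_spec y t.

Lemma thetaP i : theta_spec (c i * g h) (T i).
Proof.
  unfold theta.
  destruct (Rle_dec (ds 0) (c i * g h)); [now apply theta_zero|].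
  destruct (Rle_dec (c i * g h) (ds b)); [apply theta_full; auto; lra|].
  destruct (sinv_ds (c i * g h)) as [Hin Heq]; [lra|].
  now apply theta_inner; [lra | |].
Qed.

Lemma ds_0_pos : 0 < ds 0.
Proof. pose proof (ds_decreasing 0 b ltac:(lra) b_pos ltac:(lra)); lra. Qed.

Lemma theta_nonneg i : 0 <= T i.
Proof. destruct (thetaP i); lra. Qed.

Lemma c_pos i : (1 <= i <= k)%nat -> 0 < c i.
Proof.
  intros Hi; pose proof (antitone_step_le k c c_antitone i k ltac:(lia) ltac:(lia) ltac:(lia)); lra.
Qed.

Lemma theta_pair_le i j : (1 <= i)%nat -> (i < j)%nat -> (j <= k)%nat -> T i + T j <= b.
Proof.
  intros Hi Hij Hj.
  pose proof (sum1_ge_pair k (fun i => T i) (fun i _ => theta_nonneg i) i j Hi Hij Hj).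
  unfold beta in beta_eq_b; lra.
Qed.

(* If g(h) <= 0 every theta_i(h) equals b, and two of them already exceed b. *)
Lemma g_pos : 0 < g h.
Proof.
  destruct (Rle_lt_dec (g h) 0) as [Hg|]; [exfalso | assumption].
  assert (Hfull : forall i, (1 <= i <= k)%nat -> T i = b).
  { intros i Hi; pose proof (c_pos i Hi).
    assert (c i * g h <= 0) by nra.
    pose proof ds_0_pos; destruct (thetaP i); lra. }
  pose proof (theta_pair_le 1 2 ltac:(lia) ltac:(lia) ltac:(lia)).
  rewrite !Hfull in H by lia; lra.
Qed.

Lemma theta_le_succ i : (1 <= i < k)%nat -> T i <= T (S i).
Proof.
  intros Hi.
  pose proof (antitone_step_le k c c_antitone i (S i) ltac:(lia) ltac:(lia) ltac:(lia)).
  assert (Hy : c (S i) * g h <= c i * g h) by (pose proof g_pos; nra).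
  pose proof (theta_nonneg (S i)).
  destruct (thetaP i), (thetaP (S i)); try lra.
  destruct (Rle_lt_dec (T i) (T (S i))) as [|Hlt]; [assumption|].
  pose proof (ds_decreasing (T (S i)) (T i) ltac:(lra) Hlt ltac:(lra)); lra.
Qed.

(* A positive allocation next to a larger one cannot be b, since both sum to
   at most b; hence both are interior and s' equals the level c g(h) at each. *)
Lemma theta_ratio_interior i j : (1 <= i)%nat -> (i < j)%nat -> (j <= k)%nat ->
  T j >= T i -> T i > 0 -> ds (T j) / ds (T i) = c j / c i.
Proof.
  intros Hi Hij Hj Hge Hpos.
  pose proof (theta_pair_le i j Hi Hij Hj).
  pose proof (c_pos i ltac:(lia)); pose proof (c_pos j ltac:(lia)); pose proof g_pos.
  destruct (thetaP i) as [| |? ? Hdsi]; try lra.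
  destruct (thetaP j) as [| |? ? Hdsj]; try lra.
  rewrite Hdsi, Hdsj; field; split; lra.
Qed.

Lemma theta_ratio_zero i j : (1 <= i)%nat -> (i < j)%nat -> (j <= k)%nat ->
  T j > T i -> T i = 0 -> ds (T j) / ds 0 >= c j / c i.
Proof.
  intros Hi Hij Hj Hgt Hzero.
  pose proof (c_pos i ltac:(lia)); pose proof (c_pos j ltac:(lia)); pose proof g_pos.
  assert (Hyi : ds 0 <= c i * g h).
  { destruct (thetaP i) as [| |? ? Hdsi]; try lra.
    rewrite Hzero in Hdsi; lra. }
  assert (Hyj : c j * g h <= ds (T j)).
  { destruct (thetaP j) as [| ? ? -> |]; lra. }
  pose proof ds_0_pos.
  apply Rle_ge, Rdiv_le_cross; try lra.
  assert (0 < c j * g h) by nra; nra.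
Qed.

Lemma theta_CAP_solution : CAP_solution ds b k c (fun i => T i).
Proof.
  split; [intros; apply theta_nonneg|].
  split; [exact beta_eq_b|].
  split; [exact theta_le_succ|].
  split; [exact theta_ratio_interior | exact theta_ratio_zero].
Qed.

End CAP.

Theorem proposition2 (s ds : R -> R) (B b : R) (k : nat) (c : nat -> R)
    (I : R -> Prop) (g : R -> R) (h : R) :
  utility_hyp s ds B ->
  0 < b -> b <= B ->
  (2 <= k)%nat ->
  (forall i, (1 <= i < k)%nat -> c i >= c (S i)) ->
  c k > 0 ->
  auxiliary ds b k c I g ->
  I h ->
  beta ds b k c g h = b ->
  CAP_solution ds b k c (fun i => theta ds b c g i h).
Proof.
  intros Hu Hb HbB Hk Hc Hck _ _ Hbeta.
  pose proof Hu as (_ & _ & Hincr & Hconc & Hderiv & _).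
  apply theta_CAP_solution; try assumption.
  - intros x y Hx Hxy Hy; apply (deriv_strictly_decreasing s ds 0 B); auto; lra.
  - apply (deriv_nonneg_of_increasing s 0 B (ds b) b Hincr); [apply Hderiv |]; lra.
  - exact (sinv_spec s ds B b Hu Hb HbB).
Qed.
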